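(* Let $c=\prod_\nu p_\nu^{e_\nu}$ with distinct irregular primes $p_\nu$ and exponents $e_\nu\ge1$. Then \[ \Lambda(c)\ \ge\ \max_\nu \Lambda(p_\nu^{e_\nu}). \]
   Context: $B_n$ denotes the $n$-th Bernoulli number ($\frac{z}{e^z-1}=\sum_{n\ge0}B_n\frac{z^n}{n!}$), $\operatorname{num}(r)$ the numerator of a rational number in lowest terms. An odd prime $p$ is irregular if $p\mid B_l$ for some even $l$ with $2\le l\le p-3$. For a positive integer $c$, $\Lambda(c)$ is the least even integer $m\ge2$ such that $\operatorname{num}(B_m/m)\big/\operatorname{num}(B_m/(m(m-1)))\equiv0\pmod c$, with $\Lambda(c)=\infty$ if no such $m$ exists. *)

From Stdlib Require Import ClassicalEpsilon.
From mathcomp Require Import all_boot all_order all_algebra.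
Set Implicit Arguments. Unset Strict Implicit. Unset Printing Implicit Defensive.
Import Order.TTheory GRing.Theory Num.Theory.
Local Open Scope ring_scope.

(* bern_seq n = [:: B_0; ...; B_n], using the recursion
   B_n = -1/(n+1) * sum_{k<n} C(n+1,k) B_k  (so B_1 = -1/2, i.e. z/(e^z-1)). *)
Fixpoint bern_seq (n : nat) : seq rat :=
  match n with
  | 0 => [:: 1]
  | n'.+1 =>
      let s := bern_seq n' in
      rcons s (- (n'.+2%:R)^-1 *
               \sum_(0 <= k < n'.+1) ('C(n'.+2, k))%:R * nth 0 s k)
  end.

Definition bernoulli (n : nat) : rat := last 1 (bern_seq n).

Definition num (r : rat) : int := numq r.

(* num(B_m/m) / num(B_m/(m(m-1))) ; this is an exact integer division *)
Definition Lratio (m : nat) : int :=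
  (num (bernoulli m / m%:R) %/ num (bernoulli m / (m%:R * (m.-1)%:R)))%Z.

Definition Lcond (c : nat) (m : nat) : bool :=
  [&& (2 <= m)%N, ~~ odd m & (c%:Z %| Lratio m)%Z].

(* Lambda c = Some m (least such m), or None standing for infinity *)
Definition Lambda (c : nat) : option nat :=
  match excluded_middle_informative (exists m, Lcond c m) with
  | left H => Some (ex_minn H)
  | right _ => None
  end.

Definition le_ext (a b : option nat) : Prop :=
  match a, b with
  | _, None => True
  | None, Some _ => False
  | Some x, Some y => (x <= y)%N
  end.

Definition irregular (p : nat) : Prop :=
  [/\ prime p, odd p &
   exists l : nat, [/\ ~~ odd l, (2 <= l)%N, (l <= p - 3)%N &
                       (p%:Z %| num (bernoulli l))%Z]].

From Stdlib Require Import ClassicalEpsilon.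
From mathcomp Require Import all_boot all_order all_algebra.

(* Every m witnessing the condition for c also witnesses it for any divisor
   of c, so Lambda is monotone for divisibility; each p_i ^ e_i divides c. *)

Lemma Lcond_dvdn (a c m : nat) : (a %| c)%N -> Lcond c m -> Lcond a m.
Proof.
move=> dvd_ac /and3P[m_ge2 m_even c_dvd]; apply/and3P; split=> //.
by apply: dvdz_trans c_dvd; rewrite dvdzE.
Qed.

Lemma Lambda_le (a c : nat) :
  (forall m, Lcond c m -> Lcond a m) -> le_ext (Lambda a) (Lambda c).
Proof.
move=> Lcond_ca; rewrite /Lambda.
case: (excluded_middle_informative (exists m, Lcond c m)) => [ex_c|_]; last first.
  by case: (excluded_middle_informative _).
case: (excluded_middle_informative (exists m, Lcond a m)) => [ex_a|no_a].
  case: ex_minnP => ma _ min_a; case: ex_minnP => mc Lc_mc _ /=.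
  exact/min_a/Lcond_ca.
by case: no_a; case: ex_c => m /Lcond_ca; exists m.
Qed.

Lemma Lambda_dvdn (a c : nat) : (a %| c)%N -> le_ext (Lambda a) (Lambda c).
Proof. by move=> dvd_ac; apply: Lambda_le => m; apply: Lcond_dvdn. Qed.

Theorem lemma4p1 (n : nat) (p e : 'I_n -> nat) :
  injective p ->
  (forall i, irregular (p i)) ->
  (forall i, (0 < e i)%N) ->
  forall i : 'I_n,
    le_ext (Lambda (p i ^ e i)) (Lambda (\prod_(j < n) p j ^ e j)).
Proof.
(* The bound holds for any factorisation. *)
move=> _ _ _ i; apply: Lambda_dvdn.
by rewrite (bigD1 i) //= dvdn_mulr.
Qed.
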